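(* Let $d\ge2$, $n\ge1$, $N=nd$, $F\in[0,1)$ with $F\ne 2^{-N}$, and $c=F-\frac{1-F}{2^N-1}$. Let $\rho_0$ be the $N$-qubit depolarized GHZ state with fidelity $F$, $\rho_x=U(x)\rho_0U(x)^\dagger$, and for $\alpha\in\mathbb{R}$ let $M(\alpha)=O(\alpha)^{\otimes N}$ with $O(\alpha)=e^{i\alpha}|1\rangle\langle0|+e^{-i\alpha}|0\rangle\langle1|$. Define the error-propagation variance at $x=0$, $$V(\alpha)=\frac{\langle M(\alpha)^2\rangle-\langle M(\alpha)\rangle^2}{\big|v_1\cdot\nabla_x\langle M(\alpha)\rangle\big|^2}\Bigg|_{x=0},\qquad \langle A\rangle=\mathrm{Tr}(\rho_xA),\ v_1=\tfrac{1}{\sqrt d}(1,\dots,1)^T,$$ for those $\alpha$ where the denominator is nonzero. Then the denominator is nonzero exactly when $\sin(nd\alpha)\neq0$, in which case $$V(\alpha)=\frac{1-c^2\cos^2(nd\alpha)}{d\,n^2c^2\sin^2(nd\alpha)};$$ $V$ attains its minimum exactly at $\alpha=\frac{(2l+1)\pi}{2nd}$, $l\in\mathbb{Z}$, with minimum value $\frac{1}{d\,c^2\,n^2}$. Moreover, for every $F\in[0,1]$, $d\,c^2>1$ if and only if $$F>\frac{2^{nd}+\sqrt d-1}{2^{nd}\sqrt d}.$$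
   Context: Setting: $d$ nodes with $n$ qubits each, qubits labelled $(i,k)$; $U(x)=\exp[-i\sum_{i=0}^{d-1}x_iH_i]$ with $H_i=\frac12\sum_{k=0}^{n-1}\sigma_z^{(i,k)}$, $x\in\mathbb{R}^d$. The $N$-qubit depolarized GHZ state with fidelity $F$ is $F|\mathrm{GHZ}_N\rangle\langle\mathrm{GHZ}_N|+\frac{1-F}{2^N-1}(I-|\mathrm{GHZ}_N\rangle\langle\mathrm{GHZ}_N|)$, $|\mathrm{GHZ}_N\rangle=(|0\cdots0\rangle+|1\cdots1\rangle)/\sqrt2$. The parameter of interest is $\theta_1=v_1^Tx$; the directional derivative $v_1\cdot\nabla_x$ is the derivative with respect to $\theta_1$ at fixed values of the orthogonal complementary parameters. The value $1/(n^2)$ per sample is the variance of the optimal local (non-networked) strategy, so $dc^2>1$ means advantage over it. *)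

From HB Require Import structures.
From mathcomp Require Import all_boot all_order all_algebra.
From mathcomp Require Import complex.
From mathcomp Require Import all_classical all_reals all_analysis.

Set Implicit Arguments.
Unset Strict Implicit.
Unset Printing Implicit Defensive.

Import Order.TTheory GRing.Theory Num.Theory.
Local Open Scope ring_scope.
Local Open Scope complex_scope.

(* Qubits are labelled (i,k) with i : 'I_d (node), k : 'I_n (qubit in node).
   Computational basis states of the N = n d qubit register: bit strings
   b : {ffun qubit -> bool}, with false = |0>, true = |1>.
   An operator A is represented by its matrix elements A b b' = <b|A|b'>. *)
Definition qubit (d n : nat) := ('I_d * 'I_n)%type.
Definition cbasis (d n : nat) := {ffun qubit d n -> bool}.
Definition op (R : realType) (d n : nat) := cbasis d n -> cbasis d n -> R[i].

Section Ops.
Variables (R : realType) (d n : nat).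
Local Notation C := R[i].

Definition opmul (A B : op R d n) : op R d n :=
  fun b b' => \sum_(c : cbasis d n) A b c * B c b'.
Definition opadj (A : op R d n) : op R d n := fun b b' => conjc (A b' b).
Definition optr (A : op R d n) : C := \sum_(b : cbasis d n) A b b.
Definition opid : op R d n := fun b b' => (b == b')%:R.
Definition opadd (A B : op R d n) : op R d n := fun b b' => A b b' + B b b'.
Definition opscale (a : C) (A : op R d n) : op R d n := fun b b' => a * A b b'.

Definition expi (t : R) : C := Complex (cos t) (sin t).

Definition ghz_ket (b : cbasis d n) : C :=
  if (b == [ffun=> false]) || (b == [ffun=> true])
  then ((Num.sqrt 2)^-1)%:C else 0.
Definition ghz_proj : op R d n := fun b b' => ghz_ket b * conjc (ghz_ket b').

Definition depol_ghz (F : R) : op R d n :=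
  opadd (opscale F%:C ghz_proj)
        (opscale ((1 - F) / (2 ^+ (d * n) - 1))%:C
                 (opadd opid (opscale (-1) ghz_proj))).

(* eigenvalue of sigma_z on |0> (false) is +1, on |1> (true) is -1 *)
Definition sz (b : bool) : R := if b then -1 else 1.

(* U(x) = exp[-i sum_i x_i H_i], H_i = 1/2 sum_k sigma_z^{(i,k)} ; diagonal *)
Definition Uop (x : 'rV[R]_d) : op R d n :=
  fun b b' => (b == b')%:R *
    expi (- \sum_(q : qubit d n) x ord0 q.1 * (sz (b q) / 2)).

Definition rho (F : R) (x : 'rV[R]_d) : op R d n :=
  opmul (opmul (Uop x) (depol_ghz F)) (opadj (Uop x)).

(* O(alpha) = e^{i alpha}|1><0| + e^{-i alpha}|0><1| ; O a r c = <r|O|c> *)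
Definition Oq (a : R) (r c : bool) : C :=
  if r && ~~ c then expi a else if ~~ r && c then expi (- a) else 0.

Definition Mop (a : R) : op R d n :=
  fun b b' => \prod_(q : qubit d n) Oq a (b q) (b' q).

(* <A> = Tr(rho_x A) (a real number for Hermitian A; we take its real part) *)
Definition expect (F : R) (A : op R d n) (x : 'rV[R]_d) : R :=
  complex.Re (optr (opmul (rho F x) A)).

Definition v1 : 'rV[R]_d := const_mx (Num.sqrt d%:R)^-1.

Definition expM_line (F a : R) : R -> R :=
  fun t => expect F (Mop a) (t *: v1).

(* | v_1 . grad_x <M(alpha)> |^2 at x = 0 *)
Definition denomV (F a : R) : R := (derive1 (expM_line F a) 0) ^+ 2.

Definition Verr (F a : R) : R :=
  (expect F (opmul (Mop a) (Mop a)) 0 - (expect F (Mop a) 0) ^+ 2) / denomV F a.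

End Ops.

Definition cF (R : realType) (N : nat) (F : R) : R := F - (1 - F) / (2 ^+ N - 1).

(* U(x) is diagonal, so rho_x has the support of the depolarized GHZ state, whose
   only off-diagonal entries are the two coherences c/2 between |0...0> and
   |1...1>, now carrying the phases exp(-/+ i S) with S = sum_q x_q.  M(alpha)
   vanishes on the diagonal and maps |0...0> to exp(i N alpha) |1...1>, so only
   these coherences contribute: <M(alpha)> = c cos(N alpha - S).  Moreover
   M(alpha)^2 = 1, hence <M(alpha)^2> = 1.  Along v_1 we have S = theta_1 N / sqrt d,
   so V = (1 - c^2 cos^2) / (d n^2 c^2 sin^2)
        = 1 / (d n^2 c^2) + cos^2 (1 - c^2) / (d n^2 c^2 sin^2),
   minimal exactly where cos(N alpha) = 0 since c^2 < 1.  For the threshold,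
   c (2^N - 1) = F 2^N - 1 gives sqrt d c > -1, so d c^2 > 1 iff sqrt d c > 1,
   which is linear in F. *)

From HB Require Import structures.
From mathcomp Require Import all_boot all_order all_algebra.
From mathcomp Require Import complex.
From mathcomp Require Import all_classical all_reals all_analysis.
From mathcomp Require Import ring lra.
Set Implicit Arguments.
Unset Strict Implicit.
Unset Printing Implicit Defensive.

Import Order.TTheory GRing.Theory Num.Theory.
Local Open Scope ring_scope.

Lemma exp2n_sub1_gt0 (R : numDomainType) (N : nat) : (0 < N)%N -> 0 < 2 ^+ N - 1 :> R.
Proof. by move=> N_gt0; rewrite subr_gt0 -natrX ltr1n -{1}(expn0 2) ltn_exp2l. Qed.

Lemma norm_alternatingz (U : zmodType) (V : numDomainType) (f : U -> V) (T : U) :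
  alternating f T -> forall (m : int) (a : U), `|f (a + T *~ m)| = `|f a|.
Proof.
move=> fT m a; have normfn k b : `|f (b + T *+ k)| = `|f b|.
  by rewrite alternatingn // normrM normrX normrN1 expr1n mul1r.
case: m => k; first exact: normfn.
by rewrite -[in RHS](subrK (T *+ k.+1) a) normfn.
Qed.

Section Trigonometry.
Variable R : realType.

Lemma cos_eq0 (x : R) : cos x = 0 <-> exists l : int, x = (2 * l%:~R + 1) * pi / 2.
Proof.
have cosDpiz l (y : R) : `|cos (y + pi *~ l)| = `|cos y|.
  by apply: norm_alternatingz; apply: cosDpi.
split=> [cx0|[l ->]]; last first.
  have := cosDpiz l (pi / 2); rewrite cos_pihalf normr0 -mulrzr => /eqP.
  by rewrite normr_eq0 => /eqP <-; congr cos; field.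
have pi_gt0 := pi_gt0 R.
(* Shift x by a multiple of pi into [0, pi), where cos vanishes only at pi/2. *)
set m := Num.floor (x / pi).
have /andP[] := floor_itv (x / pi); rewrite -/m intrD => mx xm.
have lo : pi * m%:~R <= x by rewrite mulrC -ler_pdivlMr.
have hi : x < pi * (m%:~R + 1) by rewrite mulrC -ltr_pdivrMr.
set y := x - pi *~ m.
have y_pihalf : y = pi / 2.
  apply: cos_inj; rewrite ?cos_pihalf ?in_itv /=.
  - by rewrite /y -mulrzr; apply/andP; split; lra.
  - by apply/andP; split; lra.
  - by apply/eqP; rewrite -normr_eq0 -(cosDpiz m) subrK cx0 normr0.
by exists m; rewrite -[x](subrK (pi *~ m)) -/y y_pihalf -mulrzr; field.
Qed.

Lemma cos_eq0_sin_neq0 (x : R) : cos x = 0 -> sin x != 0.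
Proof.
move=> cos_x0; apply/eqP => /sin0cos1.
by rewrite cos_x0 normr0 => /eqP; rewrite eq_sym oner_eq0.
Qed.

Lemma cos_mulr_eq0 (k x : R) : k != 0 ->
  cos (k * x) = 0 <-> exists l : int, x = (2 * l%:~R + 1) * pi / (2 * k).
Proof.
move=> k_neq0; rewrite cos_eq0; split=> -[l el]; exists l.
  by rewrite -[x](mulKf k_neq0 x) el; field.
by rewrite el; field.
Qed.

Lemma is_derive_cos_affine (c A k x : R) :
  is_derive x 1 (fun t => c * cos (A - t * k)) (c * (k * sin (A - x * k))).
Proof.
have lin : is_derive x 1 (fun t => A - t * k) (- k).
  by apply: is_derive_eq; rewrite /GRing.scale /=; ring.
have := is_derive1_comp (f := cos) (g := fun t => A - t * k) (is_derive_cos _) lin.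
by move/(is_deriveZ c)/is_derive_eq; apply; rewrite /GRing.scale /= mulrNN (mulrC (sin _)).
Qed.

Lemma variance_profile_leif (K c t : R) :
  0 < K -> c != 0 -> c ^+ 2 < 1 -> sin t != 0 ->
  (K * c ^+ 2)^-1 <= (1 - c ^+ 2 * cos t ^+ 2) / (K * c ^+ 2 * sin t ^+ 2)
    ?= iff (cos t == 0).
Proof.
move=> K_gt0 c_neq0 c2_lt1 sin_neq0.
have den_gt0 : 0 < K * c ^+ 2 * sin t ^+ 2.
  by apply: mulr_gt0; [apply: mulr_gt0 |]; rewrite // exprn_even_gt0.
have gap : (1 - c ^+ 2 * cos t ^+ 2) / (K * c ^+ 2 * sin t ^+ 2) - (K * c ^+ 2)^-1
           = cos t ^+ 2 * (1 - c ^+ 2) / (K * c ^+ 2 * sin t ^+ 2).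
  have sin2_neq0 : 1 - cos t ^+ 2 != 0 by rewrite -sin2cos2 sqrf_eq0.
  by rewrite sin2cos2; field; rewrite sin2_neq0 c_neq0 gt_eqF.
split.
  rewrite -subr_ge0 gap divr_ge0 ?(ltW den_gt0) // mulr_ge0 ?sqr_ge0 //.
  by rewrite subr_ge0 ltW.
rewrite eq_sym -subr_eq0 gap mulf_eq0 invr_eq0 (gt_eqF den_gt0) orbF.
by rewrite mulf_eq0 sqrf_eq0 subr_eq0 (gt_eqF c2_lt1) orbF.
Qed.

End Trigonometry.

Section Visibility.
Variables (R : realType) (N : nat) (F : R).
Hypothesis N_gt0 : (0 < N)%N.

Lemma cF_mul : cF N F * (2 ^+ N - 1) = F * 2 ^+ N - 1.
Proof. by rewrite /cF; field; rewrite lt0r_neq0 ?exp2n_sub1_gt0. Qed.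

Lemma cF_eq0 : (cF N F == 0) = (F == (2 ^+ N)^-1).
Proof.
have A1_neq0 := lt0r_neq0 (exp2n_sub1_gt0 R N_gt0).
have A_neq0 : 2 ^+ N != 0 :> R by rewrite expf_neq0.
rewrite -[LHS]orbF -(negbTE A1_neq0) -mulf_eq0 cF_mul subr_eq0.
by rewrite -[RHS](inj_eq (mulIf A_neq0)) mulVf.
Qed.

Lemma sqr_cF_lt1 : (1 < N)%N -> 0 <= F -> F < 1 -> cF N F ^+ 2 < 1.
Proof.
move=> N_gt1 F_ge0 F_lt1.
have A_ge4 : 4 <= 2 ^+ N :> R.
  by rewrite -natrX (ler_nat R 4) -[4%N]/(2 ^ 2)%N leq_exp2l.
have := cF_mul; set c := cF N F => c_mul.
have c_lt1 : c < 1 by rewrite -(@ltr_pM2r _ (2 ^+ N - 1)) ?c_mul; nra.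
have c_gtN1 : -1 < c by rewrite -(@ltr_pM2r _ (2 ^+ N - 1)) ?c_mul; nra.
rewrite expr2; nra.
Qed.

Lemma cF_visibility_gt (d : nat) : (2 <= d)%N -> (d < 2 ^ N)%N -> 0 <= F -> F <= 1 ->
  (1 < d%:R * cF N F ^+ 2 <->
   (2 ^+ N + Num.sqrt d%:R - 1) / (2 ^+ N * Num.sqrt d%:R) < F).
Proof.
move=> d_ge2 d_lt F_ge0 F_le1.
have d_ge2R : 2 <= d%:R :> R by rewrite (ler_nat R 2 d).
have A_ge : d%:R + 1 <= 2 ^+ N :> R by rewrite -natrX natr1 ler_nat.
set A : R := 2 ^+ N in A_ge *; set s := Num.sqrt d%:R.
have s_gt0 : 0 < s by rewrite sqrtr_gt0; lra.
have s2 : s ^+ 2 = d%:R by rewrite sqr_sqrtr //; lra.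
have s_lt : s < A - 1.
  by rewrite -(@ltr_pXn2r _ 2) ?nnegrE ?s2 // ?expr2; nra.
have := cF_mul; rewrite -/A; set c := cF N F => c_mul.
have sc_gtN1 : -1 < s * c.
  have A1_gt0 : 0 < A - 1 by lra.
  have sFA_ge0 : 0 <= s * (F * A) by rewrite !mulr_ge0 //; lra.
  by rewrite -(ltr_pM2r A1_gt0) mulN1r -mulrA c_mul; nra.
have -> : d%:R * c ^+ 2 = (s * c) ^+ 2 by rewrite exprMn s2.
have -> : (1 < (s * c) ^+ 2) <-> (1 < s * c) by split; nra.
by rewrite ltr_pdivrMr; [split; nra | nra].
Qed.

End Visibility.

Lemma sumr_supp2 (V : nmodType) (T : finType) (F : T -> V) (x y : T) :
  x != y -> (forall b, b != x -> b != y -> F b = 0) -> \sum_b F b = F x + F y.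
Proof.
move=> xy F0; rewrite (bigD1 x) //= (bigD1 y) /=; last by rewrite eq_sym.
by rewrite big1 ?addr0 // => b /andP[bx /F0]; apply.
Qed.

Section ComplexExponential.
Variable R : realType.
Local Open Scope complex_scope.

Lemma expiD (s t : R) : expi (s + t) = expi s * expi t.
Proof. by rewrite /expi /= cosD sinD; congr Complex; ring. Qed.

Lemma expi0 : expi 0 = 1 :> R[i].
Proof. by rewrite /expi cos0 sin0. Qed.

Lemma conjc_expi (t : R) : (expi t)^* = expi (- t).
Proof. by rewrite /expi /= cosN sinN. Qed.

Lemma expiX (t : R) k : expi t ^+ k = expi (k%:R * t).
Proof.
elim: k => [|k IHk]; first by rewrite mul0r expi0.
by rewrite exprS IHk -expiD -{1}(mul1r t) -mulrDl -natr1 addrC.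
Qed.

Lemma sum_Oq_mul (a : R) r1 r2 : \sum_(r : bool) Oq a r1 r * Oq a r r2 = (r1 == r2)%:R.
Proof.
rewrite big_bool /Oq; case: r1; case: r2 => /=;
  by rewrite ?(mul0r, mulr0, addr0, add0r) -?expiD ?subrr ?addNr ?expi0.
Qed.

End ComplexExponential.

Section Register.
Variables (R : realType) (d n : nat).
Local Open Scope complex_scope.
Local Notation N := (n * d)%N.
Local Notation zeros := ([ffun=> false] : cbasis d n).
Local Notation ones := ([ffun=> true] : cbasis d n).
Implicit Types (F a t : R) (x : 'rV[R]_d) (b : cbasis d n) (A : op R d n).

Lemma card_qubit : #|{: qubit d n}| = N.
Proof. by rewrite card_prod !card_ord mulnC. Qed.

Lemma card_cbasis : #|{: cbasis d n}| = (2 ^ N)%N.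
Proof. by rewrite card_ffun card_bool card_qubit. Qed.

Definition phase x b : R := \sum_(q : qubit d n) x ord0 q.1 * (sz R (b q) / 2).

Definition total_phase x : R := \sum_(q : qubit d n) x ord0 q.1.

Lemma phase_zeros x : phase x zeros = total_phase x / 2.
Proof. by rewrite /phase big_distrl; apply: eq_bigr => q _; rewrite ffunE mul1r. Qed.

Lemma phase_ones x : phase x ones = - (total_phase x / 2).
Proof.
rewrite /phase big_distrl -sumrN; apply: eq_bigr => q _.
by rewrite ffunE /sz mulNr mulrN mul1r.
Qed.

Lemma total_phase0 : total_phase 0 = 0.
Proof. by rewrite /total_phase big1 // => q _; rewrite mxE. Qed.

Lemma total_phase_line t : total_phase (t *: v1 R d) = t * (N%:R / Num.sqrt d%:R).
Proof.
rewrite /total_phase (eq_bigr (fun _ => t * (Num.sqrt d%:R)^-1)) => [|q _].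
  by rewrite sumr_const card_qubit -mulrnAr -mulr_natl.
by rewrite !mxE.
Qed.

Lemma opmul_Uop_l x A b b' : opmul (Uop x) A b b' = expi (- phase x b) * A b b'.
Proof.
rewrite /opmul (bigD1 b) //= big1 ?addr0; first by rewrite /Uop eqxx mul1r.
by move=> c cb; rewrite /Uop eq_sym (negbTE cb) !mul0r.
Qed.

Lemma opmul_adj_Uop_r x A b b' :
  opmul A (opadj (Uop x)) b b' = A b b' * expi (phase x b').
Proof.
rewrite /opmul (bigD1 b') //= big1 ?addr0.
  by rewrite /opadj /Uop eqxx mul1r conjc_expi opprK.
by move=> c cb; rewrite /opadj /Uop eq_sym (negbTE cb) mul0r conjc0 mulr0.
Qed.

Lemma opmul_id_r A b b' : opmul A (@opid R d n) b b' = A b b'.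
Proof.
rewrite /opmul (bigD1 b') //= big1 ?addr0; first by rewrite /opid eqxx mulr1.
by move=> c cb; rewrite /opid (negbTE cb) mulr0.
Qed.

Lemma rhoE F x b b' : rho F x b b' = expi (phase x b' - phase x b) * depol_ghz F b b'.
Proof. by rewrite /rho opmul_adj_Uop_r opmul_Uop_l mulrAC -expiD addrC. Qed.

Lemma rho_diag F x b : rho F x b b = depol_ghz F b b.
Proof. by rewrite rhoE subrr expi0 mul1r. Qed.

Definition ghz_supp b := (b == zeros) || (b == ones).

Lemma ghz_projE b b' :
  ghz_proj R b b' = if ghz_supp b && ghz_supp b' then (2^-1)%:C else 0.
Proof.
rewrite /ghz_proj /ghz_ket -/(ghz_supp b) -/(ghz_supp b').
case: (ghz_supp b) (ghz_supp b') => [] []; rewrite ?mul0r ?conjc0 ?mulr0 //.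
by rewrite conjc_real -rmorphM -invfM -expr2 sqr_sqrtr.
Qed.

Lemma depol_ghzE F b b' : depol_ghz F b b' =
  ((1 - F) / (2 ^+ N - 1))%:C * (b == b')%:R + (cF N F)%:C * ghz_proj R b b'.
Proof. by rewrite /depol_ghz /opadd /opscale /opid /cF rmorphB mulnC; ring. Qed.

Hypothesis N_gt0 : (0 < N)%N.

Let d_gt0 : (0 < d)%N.
Proof. by move: N_gt0; rewrite muln_gt0 => /andP[]. Qed.

Let n_gt0 : (0 < n)%N.
Proof. by move: N_gt0; rewrite muln_gt0 => /andP[]. Qed.

Let some_qubit : exists q : qubit d n, q \in {: qubit d n}.
Proof. by apply/card_gt0P; rewrite card_qubit. Qed.

Lemma zeros_neq_ones : zeros != ones.
Proof. by have [q _] := some_qubit; apply/eqP => /ffunP/(_ q); rewrite !ffunE. Qed.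

Lemma depol_ghz_offdiag F b b' :
  b != b' -> depol_ghz F b b' = (cF N F)%:C * ghz_proj R b b'.
Proof. by move=> /negbTE neq_bb'; rewrite depol_ghzE neq_bb' mulr0 add0r. Qed.

Lemma trace_depol_ghz F : optr (@depol_ghz R d n F) = 1.
Proof.
have A1_gt0 := exp2n_sub1_gt0 R N_gt0.
rewrite /optr; under eq_bigr do rewrite depol_ghzE eqxx mulr1.
rewrite big_split /= sumr_const card_cbasis -big_distrr /= (sumr_supp2 zeros_neq_ones).
  rewrite !ghz_projE /ghz_supp !eqxx orbT /= -!rmorphMn -!rmorphD -rmorphM -rmorphD.
  by rewrite -[RHS]/(1%:C); congr _%:C; rewrite /cF -mulr_natr natrX; field; rewrite lt0r_neq0.
by move=> b /negbTE b_zeros /negbTE b_ones; rewrite ghz_projE /ghz_supp b_zeros b_ones.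
Qed.

Lemma Mop_diag a b : Mop a b b = 0.
Proof. by have [q _] := some_qubit; rewrite /Mop (bigD1 q) //= /Oq andbN andNb mul0r. Qed.

Lemma Mop_ones_zeros a : Mop a ones zeros = expi (N%:R * a).
Proof.
rewrite /Mop (eq_bigr (fun _ => expi a)) => [|q _]; last by rewrite !ffunE.
by rewrite prodr_const card_qubit expiX.
Qed.

Lemma Mop_zeros_ones a : Mop a zeros ones = expi (- (N%:R * a)).
Proof.
rewrite /Mop (eq_bigr (fun _ => expi (- a))) => [|q _]; last by rewrite !ffunE.
by rewrite prodr_const card_qubit expiX mulrN.
Qed.

Lemma trace_rho_Mop F a x : optr (opmul (@rho R d n F x) (Mop a)) =
  rho F x zeros ones * Mop a ones zeros + rho F x ones zeros * Mop a zeros ones.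
Proof.
have zo_neq_oz : (zeros, ones) != (ones, zeros) by rewrite xpair_eqE negb_and zeros_neq_ones.
rewrite /optr /opmul pair_bigA /=.
rewrite (sumr_supp2 (F := fun p => rho F x p.1 p.2 * Mop a p.2 p.1) zo_neq_oz) //.
move=> [b b'] /= ne_zo ne_oz; have [<-|neq_bb'] := eqVneq b b'.
  by rewrite Mop_diag mulr0.
rewrite rhoE depol_ghz_offdiag // ghz_projE.
suff -> : ghz_supp b && ghz_supp b' = false by rewrite !(mulr0, mul0r).
apply/negbTE/negP => /andP[supp_b supp_b']; move: ne_zo ne_oz neq_bb'.
by case/orP: supp_b => /eqP->; case/orP: supp_b' => /eqP->; rewrite !eqxx.
Qed.

Lemma expect_Mop F a x :
  expect F (@Mop R d n a) x = cF N F * cos (N%:R * a - total_phase x).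
Proof.
have ones_neq_zeros : ones != zeros by rewrite eq_sym zeros_neq_ones.
rewrite /expect trace_rho_Mop !rhoE !depol_ghz_offdiag ?zeros_neq_ones //.
rewrite !ghz_projE /ghz_supp !eqxx !orbT /= phase_zeros phase_ones.
rewrite Mop_ones_zeros Mop_zeros_ones.
set S := total_phase x; set t := N%:R * a.
have halfE u v : expi u * ((cF N F)%:C * (2^-1)%:C) * expi v = (cF N F / 2)%:C * expi (u + v).
  by rewrite rmorphM expiD; ring.
rewrite !halfE raddfD /= !mul0r !subr0.
have -> : - (S / 2) - S / 2 + t = t - S by field.
have -> : S / 2 - - (S / 2) - t = - (t - S) by field.
by rewrite cosN; field.
Qed.

Lemma Mop_sqr a : opmul (Mop a) (Mop a) = @opid R d n.
Proof.
apply/funext => b; apply/funext => b'; rewrite /opmul /Mop /opid.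
under eq_bigr do rewrite -big_split /=.
rewrite -(bigA_distr_bigA (fun q r => Oq a (b q) r * Oq a r (b' q))).
under eq_bigr do rewrite sum_Oq_mul.
have [<-|neq_bb'] := eqVneq b b'; first by rewrite big1 // => q _; rewrite eqxx.
have [q neq_q] : exists q, b q != b' q.
  apply/existsP; rewrite -negb_forall; apply: contra neq_bb' => /forallP eq_bb'.
  by apply/eqP/ffunP => q; apply/eqP.
by rewrite (bigD1 q) //= (negbTE neq_q) mul0r.
Qed.

Lemma expect_Mop_sqr F a x : expect F (opmul (@Mop R d n a) (Mop a)) x = 1.
Proof.
rewrite /expect.
have -> : optr (opmul (@rho R d n F x) (opmul (Mop a) (Mop a))) = optr (@depol_ghz R d n F).
  by apply: eq_bigr => b _; rewrite Mop_sqr opmul_id_r rho_diag.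
by rewrite trace_depol_ghz.
Qed.

Lemma expM_lineE F a : expM_line d n F a =
  (fun t => cF N F * cos (N%:R * a - t * (N%:R / Num.sqrt d%:R))).
Proof. by apply/funext => t; rewrite /expM_line expect_Mop total_phase_line. Qed.

Lemma derivable_expM_line F a : derivable (expM_line d n F a) 0 1.
Proof. by rewrite expM_lineE; apply: ex_derive; apply: is_derive_cos_affine. Qed.

Lemma denomVE F a :
  denomV d n F a = d%:R * n%:R ^+ 2 * cF N F ^+ 2 * sin (N%:R * a) ^+ 2.
Proof.
rewrite /denomV expM_lineE derive1E.
have [_ ->] := is_derive_cos_affine (cF N F) (N%:R * a) (N%:R / Num.sqrt d%:R) 0.
have d_neq0 : d%:R != 0 :> R by rewrite pnatr_eq0 -lt0n.
by rewrite mul0r subr0 !exprMn exprVn sqr_sqrtr ?ler0n // natrM; field.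
Qed.

Lemma VerrE F a : Verr d n F a = (1 - cF N F ^+ 2 * cos (N%:R * a) ^+ 2)
  / (d%:R * n%:R ^+ 2 * cF N F ^+ 2 * sin (N%:R * a) ^+ 2).
Proof. by rewrite /Verr expect_Mop_sqr expect_Mop total_phase0 subr0 denomVE exprMn. Qed.

Lemma denomV_neq0 F a : cF N F != 0 -> (denomV d n F a != 0) = (sin (N%:R * a) != 0).
Proof.
move=> c_neq0; have K_neq0 : d%:R * n%:R ^+ 2 * cF N F ^+ 2 != 0.
  by rewrite !mulf_neq0 ?expf_neq0 // pnatr_eq0 -lt0n.
by rewrite denomVE mulf_eq0 negb_or K_neq0 sqrf_eq0.
Qed.

Lemma Verr_leif F a : cF N F != 0 -> cF N F ^+ 2 < 1 -> sin (N%:R * a) != 0 ->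
  (d%:R * cF N F ^+ 2 * n%:R ^+ 2)^-1 <= Verr d n F a ?= iff (cos (N%:R * a) == 0).
Proof.
move=> c_neq0 c2_lt1 sin_neq0; rewrite VerrE (mulrAC d%:R).
by apply: variance_profile_leif; rewrite // mulr_gt0 ?exprn_gt0 ?ltr0n.
Qed.

End Register.

Theorem mainTheorem6 (R : realType) (d n : nat) (F : R) :
  (2 <= d)%N -> (1 <= n)%N ->
  0 <= F -> F < 1 -> F != (2 ^+ (n * d))^-1 ->
  let N := (n * d)%N in
  let c := cF N F in
  (forall a : R, derivable (expM_line d n F a) 0 1) /\
  (forall a : R, denomV d n F a != 0 <-> sin (N%:R * a) != 0) /\
  (forall a : R, sin (N%:R * a) != 0 ->
     Verr d n F a = (1 - c ^+ 2 * cos (N%:R * a) ^+ 2)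
                  / (d%:R * n%:R ^+ 2 * c ^+ 2 * sin (N%:R * a) ^+ 2)) /\
  (forall a : R, denomV d n F a != 0 -> (d%:R * c ^+ 2 * n%:R ^+ 2)^-1 <= Verr d n F a) /\
  (forall a : R, (denomV d n F a != 0 /\ Verr d n F a = (d%:R * c ^+ 2 * n%:R ^+ 2)^-1)
     <-> exists l : int, a = (2 * l%:~R + 1) * pi / (2 * N%:R)) /\
  (forall F' : R, 0 <= F' -> F' <= 1 ->
     (1 < d%:R * (cF N F') ^+ 2 <->
      (2 ^+ N + Num.sqrt d%:R - 1) / (2 ^+ N * Num.sqrt d%:R) < F')).
Proof.
move=> d_ge2 n_ge1 F_ge0 F_lt1 F_neq N c.
have N_gt1 : (1 < N)%N by rewrite (leq_trans d_ge2) // leq_pmull.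
have N_gt0 := ltnW N_gt1.
have c_neq0 : c != 0 by rewrite cF_eq0.
have c2_lt1 : c ^+ 2 < 1 by rewrite sqr_cF_lt1.
split; first exact: derivable_expM_line.
split; first by move=> a; rewrite denomV_neq0.
split; first by move=> a _; rewrite VerrE.
split; first by move=> a; rewrite denomV_neq0 // => /(Verr_leif N_gt0 c_neq0 c2_lt1) [].
split.
  move=> a; rewrite denomV_neq0 // -cos_mulr_eq0 ?pnatr_eq0 -?lt0n //.
  split=> [[sin_neq0 V_min]|cos_Na0].
    by apply/eqP; rewrite -(Verr_leif N_gt0 c_neq0 c2_lt1 sin_neq0).2 V_min.
  have sin_neq0 := cos_eq0_sin_neq0 cos_Na0.
  by split=> //; apply/esym/eqP; rewrite (Verr_leif N_gt0 c_neq0 c2_lt1 sin_neq0).2 cos_Na0.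
move=> F' F'_ge0 F'_le1; apply: cF_visibility_gt => //.
by apply: leq_trans (ltn_expl d (isT : (1 < 2)%N)) _; rewrite leq_pexp2l // leq_pmull.
Qed.
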